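(* Let $H=\Bbbk^G{}^\tau\#_\sigma\Bbbk F$ be the Hopf algebra described in the context and for $f\in F$ let $C_f=\mathrm{span}\{p_g\#(g'\triangleright f)\mid g,g'\in G\}$. (1) For every $f\in F$, $C_f$ is a cosemisimple subcoalgebra of $H$; moreover $C_{1_F}$ is a (cosemisimple) Hopf subalgebra of $H$ and $C_{1_F}\cong\Bbbk^G$ as Hopf algebras via $p_g\#1_F\mapsto p_g$. (2) If $G_f=\{1_G\}$, then $C_f$ is a simple subcoalgebra of $H$, and in this case $S(C_f)=C_f$ if and only if $G_{f,f^{-1}}\neq\emptyset$.
   Context: Standing setup: $\Bbbk$ is an algebraically closed field of characteristic $0$, $F$ a group (possibly infinite), $G$ a finite group, and $(F,G,\triangleleft,\triangleright)$ a matched pair: $\triangleright:G\times F\to F$ a left action of $G$ on the set $F$, $\triangleleft:G\times F\to G$ a right action of $F$ on the set $G$, with $g\triangleright(ff')=(g\triangleright f)((g\triangleleft f)\triangleright f')$ and $(gg')\triangleleft f=(g\triangleleft(g'\triangleright f))(g'\triangleleft f)$. Maps $\sigma:G\times F\times F\to\Bbbk^\times$, $(g,f,f')\mapsto\sigma(g;f,f')$, and $\tau:G\times G\times F\to\Bbbk^\times$, $(g,g',f)\mapsto\tau(g,g';f)$, satisfy: $\sigma(g;1_F,f)=\sigma(g;f,1_F)=\sigma(1_G;f,f')=1$; $\sigma(g\triangleleft f;f',f'')\sigma(g;f,f'f'')=\sigma(g;f,f')\sigma(g;ff',f'')$; $\tau(1_G,g;f)=\tau(g,1_G;f)=\tau(g,g';1_F)=1$;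 $\tau(g,g';g''\triangleright f)\tau(gg',g'';f)=\tau(g,g'g'';f)\tau(g',g'';f)$; and $\sigma(gg';f,f')\tau(g,g';ff')=\sigma(g;g'\triangleright f,(g'\triangleleft f)\triangleright f')\sigma(g';f,f')\tau(g,g';f)\tau(g\triangleleft(g'\triangleright f),g'\triangleleft f;f')$. $H$ has basis $\{p_g\#f\}$ ($\{p_g\}$ the dual basis of $\Bbbk^G$), unit $\sum_g p_g\#1_F$, product $(p_g\#f)(p_{g'}\#f')=\delta_{g\triangleleft f,g'}\sigma(g;f,f')p_g\#ff'$, coproduct $\Delta(p_g\#f)=\sum_{x\in G}\tau(gx^{-1},x;f)\,p_{gx^{-1}}\#(x\triangleright f)\otimes p_x\#f$, counit $\varepsilon(p_g\#f)=\delta_{g,1_G}$, antipode $S(p_g\#f)=\sigma(g^{-1};g\triangleright f,(g\triangleright f)^{-1})^{-1}\tau(g^{-1},g;f)^{-1}p_{(g\triangleleft f)^{-1}}\#(g\triangleright f)^{-1}$. Notation: $G_f=\{g\in G\mid g\triangleright f=f\}$ and $G_{f,f^{-1}}=\{g\in G\mid g\triangleright f=f^{-1}\}$. *)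

From HB Require Import structures.
From mathcomp Require Import all_boot all_order all_algebra all_fingroup.
From mathcomp Require Import boolp classical_sets fsbigop cardinality.
Unset Implicit Arguments.
Import Order.TTheory GRing.Theory.
Local Open Scope classical_set_scope.
Local Open Scope ring_scope.

Section LinAlg.
Variable K : fieldType.

Definition finsupp (T : Type) (v : T -> K) : Prop := finite_set [set x | v x != 0].

Definition span (T : Type) (S : set (T -> K)) : set (T -> K) :=
  [set v | exists (n : nat) (c : 'I_n -> K) (w : 'I_n -> T -> K),
      (forall i, S (w i)) /\ v = (fun z => \sum_(i < n) c i * w i z)].

(* elementary tensor a (x) b, as a function on pairs of basis indices *)
Definition tens (A B : Type) (a : A -> K) (b : B -> K) : (A * B)%type -> K :=
  fun z => a z.1 * b z.2.

Definition tensC (A : Type) (C : set (A -> K)) : set ((A * A)%type -> K) :=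
  span (A * A)%type [set t | exists a b, C a /\ C b /\ t = tens A A a b].

Definition dvec (T : eqType) (t : T) : T -> K := fun x => if x == t then 1 else 0.
End LinAlg.
Arguments finsupp {K T}.
Arguments span {K T}.
Arguments tens {K A B}.
Arguments tensC {K A}.
Arguments dvec {K T}.

Section Bicrossed.
Variables (K : fieldType) (G : finGroupType) (F : groupType).
Variables (tr : G -> F -> F) (tl : G -> F -> G).
Variables (sigma : G -> F -> F -> K) (tau : G -> G -> F -> K).

(* An element of H is a finitely supported function G * F -> K, i.e.
   h = \sum h(g,f) p_g # f.  The basis vector p_g # f : *)
Definition pb (g : G) (f : F) : (G * F)%type -> K := dvec (g, f).

Definition linext (W : Type) (B : (G * F)%type -> W -> K) (h : (G * F)%type -> K) : W -> K :=
  fun w => \sum_(x \in [set: (G * F)%type]) h x * B x w.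

(* (p_g#f)(p_g'#f') = delta_{g<|f, g'} sigma(g;f,f') p_g # ff' *)
Definition mulB (x y : (G * F)%type) : (G * F)%type -> K :=
  fun z => if tl x.1 x.2 == y.1 then sigma x.1 x.2 y.2 * pb x.1 (x.2 * y.2)%g z else 0.

Definition mulH (h h' : (G * F)%type -> K) : (G * F)%type -> K :=
  fun z => \sum_(x \in [set: (G * F)%type]) \sum_(y \in [set: (G * F)%type])
             h x * h' y * mulB x y z.

Definition unitH : (G * F)%type -> K := fun z => \sum_(g : G) pb g 1%g z.

(* Delta(p_g#f) = \sum_x tau(gx^-1,x;f) p_{gx^-1}#(x|>f) (x) p_x#f *)
Definition DeltaB (x : (G * F)%type) : ((G * F) * (G * F))%type -> K :=
  fun z => \sum_(t : G) tau (x.1 * t^-1)%g t x.2 *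
                        tens (pb (x.1 * t^-1)%g (tr t x.2)) (pb t x.2) z.

Definition DeltaH (h : (G * F)%type -> K) := linext ((G * F) * (G * F))%type DeltaB h.

Definition epsH (h : (G * F)%type -> K) : K :=
  \sum_(x \in [set: (G * F)%type]) h x * (if x.1 == 1%g then 1 else 0).

(* S(p_g#f) = sigma(g^-1; g|>f, (g|>f)^-1)^-1 tau(g^-1,g;f)^-1 p_{(g<|f)^-1}#(g|>f)^-1 *)
Definition SB (x : (G * F)%type) : (G * F)%type -> K :=
  fun z => (sigma (x.1)^-1%g (tr x.1 x.2) (tr x.1 x.2)^-1%g)^-1 * (tau (x.1)^-1%g x.1 x.2)^-1
           * pb (tl x.1 x.2)^-1%g (tr x.1 x.2)^-1%g z.

Definition SH (h : (G * F)%type -> K) := linext (G * F)%type SB h.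

Definition subcoalg (C : set ((G * F)%type -> K)) : Prop :=
  (forall h, C h -> finsupp h) /\ span C `<=` C /\
  (forall h, C h -> tensC C (DeltaH h)).

Definition simple_subcoalg (D : set ((G * F)%type -> K)) : Prop :=
  subcoalg D /\ (exists h, D h /\ h <> (fun _ => 0)) /\
  (forall E, subcoalg E -> E `<=` D -> E = [set (fun _ => 0)] \/ E = D).

(* cosemisimple subcoalgebra: equal to its coradical, i.e. to the sum of its
   simple subcoalgebras *)
Definition cosemisimple_subcoalg (C : set ((G * F)%type -> K)) : Prop :=
  subcoalg C /\
  C `<=` span [set h | exists D, simple_subcoalg D /\ D `<=` C /\ D h].

Definition hopf_subalg (C : set ((G * F)%type -> K)) : Prop :=
  subcoalg C /\ C unitH /\ (forall a b, C a -> C b -> C (mulH a b)) /\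
  (forall a, C a -> C (SH a)).

Definition Cf (f : F) : set ((G * F)%type -> K) :=
  span [set v | exists g g' : G, v = pb g (tr g' f)].

Definition pG (g : G) : G -> K := dvec g.
Definition kG_mul (a b : G -> K) : G -> K := fun x => a x * b x.
Definition kG_unit : G -> K := fun _ => 1.
(* Delta(p_g) = \sum_x p_{gx^-1} (x) p_x, i.e. Delta(a)(u,v) = a(uv) *)
Definition kG_Delta (a : G -> K) : (G * G)%type -> K :=
  fun z => \sum_(g : G) a g * \sum_(t : G) tens (pG (g * t^-1)%g) (pG t) z.
Definition kG_eps (a : G -> K) : K := a 1%g.
Definition kG_S (a : G -> K) : G -> K := fun z => \sum_(g : G) a g * pG (g^-1)%g z.

Definition phi1 (h : (G * F)%type -> K) : G -> K := fun g => h (g, 1%g).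
Definition phi1_tens (t : ((G * F) * (G * F))%type -> K) : (G * G)%type -> K :=
  fun z => t ((z.1, 1%g), (z.2, 1%g)).

Definition hopf_iso_kG : Prop :=
  (forall g, phi1 (pb g 1%g) = pG g) /\
  (forall a b, Cf 1%g a -> Cf 1%g b -> phi1 a = phi1 b -> a = b) /\
  (forall c : G -> K, exists a, Cf 1%g a /\ phi1 a = c) /\
  (forall a b (k : K), Cf 1%g a -> Cf 1%g b ->
      phi1 (fun z => k * a z + b z) = (fun g => k * phi1 a g + phi1 b g)) /\
  (forall a b, Cf 1%g a -> Cf 1%g b -> phi1 (mulH a b) = kG_mul (phi1 a) (phi1 b)) /\
  phi1 unitH = kG_unit /\
  (forall a, Cf 1%g a -> kG_Delta (phi1 a) = phi1_tens (DeltaH a)) /\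
  (forall a, Cf 1%g a -> kG_eps (phi1 a) = epsH a) /\
  (forall a, Cf 1%g a -> kG_S (phi1 a) = phi1 (SH a)).

End Bicrossed.

(** The space [C_f] consists of the functions supported on [G * (G |> f)], and the
    coproduct [Delta h ((a, w), (b, y)) = [w = b |> y] tau(a, b; y) h (ab, y)] preserves
    this support, so [C_f] is a subcoalgebra; on [C_1] (where [g |> 1 = 1]) the operations
    of [H] reduce to those of [k^G].  If [G_f = 1], the map [g |-> g |> y] is injective on
    the orbit, so two slices [a |-> Delta h (a, b)] and [b |-> Delta h (a, b)] of a nonzero
    [h] isolate any basis vector [p_g # y]: a nonzero subcoalgebra of [C_f] is all of it.
    The antipode maps [p_g # f] to a nonzero multiple of [p_(g <| f)^-1 # (g |> f)^-1], so
    it preserves [C_f] exactly when the orbit of [f] contains [f^-1].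
    Cosemisimplicity is Maschke's theorem: the slices are twisted actions of [G] on [C_f]
    from both sides, averaging any projection onto a subcoalgebra [E] over both actions
    (dividing by [|G|^2], invertible in characteristic 0) yields a projection commuting with
    all slices, its kernel is a complementary subcoalgebra, and induction on the dimension
    splits every subcoalgebra of [C_f] into simple ones. *)

From HB Require Import structures.
From mathcomp Require Import all_boot all_order all_algebra all_fingroup.
From mathcomp Require Import boolp classical_sets fsbigop cardinality.
From mathcomp Require Import ring.

Import GRing.Theory.
Local Open Scope classical_set_scope.
Local Open Scope ring_scope.

Set Implicit Arguments.
Unset Strict Implicit.

Section Span.
Variables (K : fieldType) (T : Type).
Implicit Types (S E : set (T -> K)) (u v : T -> K).

Definition subspace S := span S `<=` S.

Lemma span_ord S n (c : 'I_n -> K) (w : 'I_n -> T -> K) :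
  (forall i, S (w i)) -> span S (fun z => \sum_(i < n) c i * w i z).
Proof. by move=> Sw; exists n, c, w. Qed.

Lemma span_seq (X : eqType) S (r : seq X) (c : X -> K) (w : X -> T -> K) :
  (forall x, x \in r -> S (w x)) -> span S (fun z => \sum_(x <- r) c x * w x z).
Proof.
case: r => [|x0 r] Sw.
  exists 0%N, (fun=> 0), (fun _ _ => 0); split=> [[]//|].
  by apply: funext => z; rewrite big_nil big_ord0.
exists (size (x0 :: r)), (c \o nth x0 (x0 :: r)), (w \o nth x0 (x0 :: r)).
split=> [i|]; first by apply: Sw; apply: mem_nth.
by apply: funext => z; rewrite (big_nth x0) big_mkord.
Qed.

Lemma sub_span S : S `<=` span S.
Proof.
move=> u Su; exists 1%N, (fun=> 1), (fun=> u); split=> //.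
by apply: funext => z; rewrite big_ord1 mul1r.
Qed.

Lemma span_mono S E : S `<=` E -> span S `<=` span E.
Proof. by move=> SE _ [n [c [w [Sw ->]]]]; exists n, c, w; split=> // i; apply: SE. Qed.

Lemma span0 S : span S (fun=> 0).
Proof.
exists 0%N, (fun=> 0), (fun _ _ => 0); split=> [[]//|].
by apply: funext => z; rewrite big_ord0.
Qed.

Lemma spanD S u v : span S u -> span S v -> span S (fun z => u z + v z).
Proof.
move=> [n [c [w [Sw ->]]]] [m [d [x [Sx ->]]]].
exists (n + m)%N, (fun i => match split i with inl j => c j | inr j => d j end),
  (fun i => match split i with inl j => w j | inr j => x j end).
split=> [i|]; first by case: (split i).
apply: funext => z; rewrite big_split_ord; congr (_ + _); apply: eq_bigr => i _.
  by rewrite (unsplitK (inl i)).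
by rewrite (unsplitK (inr i)).
Qed.

Lemma spanZ S k u : span S u -> span S (fun z => k * u z).
Proof.
move=> [n [c [w [Sw ->]]]]; exists n, (fun i => k * c i), w; split=> //.
by apply: funext => z; rewrite mulr_sumr; apply: eq_bigr => i _; rewrite mulrA.
Qed.

Section Subspace.
Variables (E : set (T -> K)) (subE : subspace E).

Lemma subspace0 : E (fun=> 0).
Proof. exact/subE/span0. Qed.

Lemma subspaceD u v : E u -> E v -> E (fun z => u z + v z).
Proof. by move=> Eu Ev; apply/subE/spanD; apply: sub_span. Qed.

Lemma subspaceZ k u : E u -> E (fun z => k * u z).
Proof. by move=> Eu; apply/subE/spanZ/sub_span. Qed.

Lemma subspaceB u v : E u -> E v -> E (fun z => u z - v z).
Proof.
move=> Eu Ev; rewrite (_ : (fun z => _) = fun z => u z + (-1) * v z).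
  exact/subspaceD/subspaceZ.
by apply: funext => z; rewrite mulN1r.
Qed.

Lemma subspace_sum (X : eqType) (r : seq X) (w : X -> T -> K) :
  (forall x, x \in r -> E (w x)) -> E (fun z => \sum_(x <- r) w x z).
Proof.
elim: r => [|x r IHr] Ew; first by under eq_fun do rewrite big_nil; apply: subspace0.
under eq_fun do rewrite big_cons; apply: subspaceD; first by apply: Ew; rewrite mem_head.
by apply: IHr => y yr; apply: Ew; rewrite in_cons yr orbT.
Qed.

End Subspace.

Lemma tensC_lslice (E : set (T -> K)) t b :
  subspace E -> tensC E t -> E (fun a => t (a, b)).
Proof.
move=> subE [n [c [w [Ew ->]]]]; apply: subspace_sum => // i _.
have [x [y [Ex [Ey ->]]]] := Ew i; rewrite /tens /=.
rewrite (_ : (fun _ => _) = fun a => c i * y b * x a); first exact: subspaceZ.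
by apply: funext => a; rewrite mulrAC mulrA.
Qed.

Lemma tensC_rslice (E : set (T -> K)) t a :
  subspace E -> tensC E t -> E (fun b => t (a, b)).
Proof.
move=> subE [n [c [w [Ew ->]]]]; apply: subspace_sum => // i _.
have [x [y [Ex [Ey ->]]]] := Ew i; rewrite /tens /=.
rewrite (_ : (fun _ => _) = fun b => c i * x a * y b); first exact: subspaceZ.
by apply: funext => b; rewrite mulrA.
Qed.

Definition linop (P : (T -> K) -> T -> K) :=
  forall k u v, P (fun z => k * u z + v z) = fun z => k * P u z + P v z.

Section LinearOperator.
Variables (P : (T -> K) -> T -> K) (linP : linop P).

Lemma linop0 : P (fun=> 0) = fun=> 0.
Proof.
have := linP (-1) (fun=> 0) (fun=> 0).
rewrite (_ : (fun _ => _) = fun=> 0); last by apply: funext => z; rewrite mulr0 addr0.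
by move/(congr1 (fun u => u _)) => /= e; apply: funext => z; rewrite [LHS]e mulN1r addNr.
Qed.

Lemma linopZ k u : P (fun z => k * u z) = fun z => k * P u z.
Proof.
have := linP k u (fun=> 0); rewrite linop0.
by under eq_fun do rewrite addr0; move=> ->; apply: funext => z; rewrite addr0.
Qed.

Lemma linopD u v : P (fun z => u z + v z) = fun z => P u z + P v z.
Proof.
have := linP 1 u v; under eq_fun do rewrite mul1r.
by move=> ->; apply: funext => z; rewrite mul1r.
Qed.

Lemma linopB u v : P (fun z => u z - v z) = fun z => P u z - P v z.
Proof.
have := linP (-1) v u; under eq_fun do rewrite mulN1r addrC.
by move=> ->; apply: funext => z; rewrite mulN1r addrC.
Qed.

Lemma linop_sum (X : Type) (r : seq X) (w : X -> T -> K) :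
  P (fun z => \sum_(x <- r) w x z) = fun z => \sum_(x <- r) P (w x) z.
Proof.
elim: r => [|x r IHr].
  under eq_fun do rewrite big_nil; rewrite linop0.
  by apply: funext => z; rewrite big_nil.
under eq_fun do rewrite big_cons; rewrite linopD IHr.
by apply: funext => z; rewrite big_cons.
Qed.

Lemma linop_sumZ (X : Type) (r : seq X) (c : X -> K) (w : X -> T -> K) :
  P (fun z => \sum_(x <- r) c x * w x z) = fun z => \sum_(x <- r) c x * P (w x) z.
Proof.
rewrite (linop_sum r (fun x z => c x * w x z)).
by apply: funext => z; apply: eq_bigr => x _; rewrite linopZ.
Qed.

End LinearOperator.

Lemma comp_linop P Q : linop P -> linop Q -> linop (fun h => P (Q h)).
Proof. by move=> linP linQ k u v; rewrite linQ linP. Qed.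

Lemma scale_linop (c : K) P : linop P -> linop (fun h z => c * P h z).
Proof. by move=> linP k u v; apply: funext => z; rewrite linP mulrDr mulrCA. Qed.

Lemma sum_linop (X : Type) (r : seq X) (P : X -> (T -> K) -> T -> K) :
  (forall x, linop (P x)) -> linop (fun h z => \sum_(x <- r) P x h z).
Proof.
move=> linP k u v; apply: funext => z; rewrite mulr_sumr -big_split.
by apply: eq_bigr => x _; rewrite linP.
Qed.

(** [(1 - pi) (x) (1 - pi)] on functions of two variables. *)
Definition bi_compl (pi : (T -> K) -> T -> K) (t : T * T -> K) : T * T -> K := fun z =>
  t z - pi (fun a => t (a, z.2)) z.1 - pi (fun b => t (z.1, b)) z.2
      + pi (fun a => pi (fun b => t (a, b)) z.2) z.1.

Section BiComplement.
Variables (pi : (T -> K) -> T -> K) (linpi : linop pi).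

Lemma bi_compl_tens u v :
  bi_compl pi (tens u v) = tens (fun z => u z - pi u z) (fun z => v z - pi v z).
Proof.
apply: funext => -[z1 z2]; rewrite /bi_compl /tens /=.
have piu : pi (fun a => u a * v z2) = fun z => v z2 * pi u z.
  by under eq_fun do rewrite mulrC; apply: linopZ.
have piuv : (fun a => pi (fun b => u a * v b) z2) = fun a => pi v z2 * u a.
  by apply: funext => a; rewrite (linopZ linpi) mulrC.
rewrite piu (linopZ linpi) piuv (linopZ linpi).
ring.
Qed.

Lemma bi_compl_sum n (c : 'I_n -> K) (w : 'I_n -> T * T -> K) :
  bi_compl pi (fun z => \sum_(i < n) c i * w i z) = fun z => \sum_(i < n) c i * bi_compl pi (w i) z.
Proof.
apply: funext => -[z1 z2]; rewrite /bi_compl /=.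
have pisum : (fun a => pi (fun b => \sum_(i < n) c i * w i (a, b)) z2) =
             (fun a => \sum_(i < n) c i * pi (fun b => w i (a, b)) z2).
  by apply: funext => a; rewrite (linop_sumZ linpi).
rewrite pisum !(linop_sumZ linpi) -!sumrB -big_split /=; apply: eq_bigr => i _.
ring.
Qed.

End BiComplement.

End Span.

Lemma sum_seq_pred1 (R : nzSemiRingType) (X : eqType) (r : seq X) (F0 : X -> R) z :
  uniq r -> \sum_(x <- r) (x == z)%:R * F0 x = (z \in r)%:R * F0 z.
Proof.
move=> ur; case: (boolP (z \in r)) => zr.
  rewrite (bigD1_seq z) //= eqxx mul1r big1 ?addr0 // => x /negPf ->.
  by rewrite mul0r.
rewrite mul0r big1_seq // => x /= xr.
by case: eqP => [exz|]; [rewrite -exz xr in zr | rewrite mul0r].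
Qed.

Lemma fsbig_setT_single (X : choiceType) (R : nmodType) (F0 : X -> R) x0 :
  (forall x, x != x0 -> F0 x = 0) -> \sum_(x \in [set: X]) F0 x = F0 x0.
Proof.
move=> F0x0; rewrite -(fsbig_widen [set x0] [set: X] F0) ?fsbig_set1 //.
by move=> x [_ /= /eqP]; apply: F0x0.
Qed.

Section Bicrossed.
Variables (K : fieldType) (G : finGroupType) (F : groupType).
Variables (tr : G -> F -> F) (tl : G -> F -> G).
Variables (sigma : G -> F -> F -> K) (tau : G -> G -> F -> K).
Hypothesis tr1 : forall f, tr 1%g f = f.
Hypothesis trM : forall g g' f, tr (g * g')%g f = tr g (tr g' f).
Hypothesis tl1 : forall g, tl g 1%g = g.
Hypothesis tlM : forall g f f', tl g (f * f')%g = tl (tl g f) f'.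
Hypothesis mp1 : forall g f f', tr g (f * f')%g = (tr g f * tr (tl g f) f')%g.
Hypothesis mp2 : forall g g' f, tl (g * g')%g f = (tl g (tr g' f) * tl g' f)%g.
Hypothesis sigma_nz : forall g f f', sigma g f f' != 0.
Hypothesis tau_nz : forall g g' f, tau g g' f != 0.
Hypothesis sigma_n :
  forall g f f', sigma g 1%g f = 1 /\ sigma g f 1%g = 1 /\ sigma 1%g f f' = 1.
Hypothesis tau_n :
  forall g g' f, tau 1%g g f = 1 /\ tau g 1%g f = 1 /\ tau g g' 1%g = 1.
Hypothesis tau_cocycle : forall g g' g'' f,
  tau g g' (tr g'' f) * tau (g * g')%g g'' f = tau g (g' * g'')%g f * tau g' g'' f.

Lemma trK g : cancel (tr g) (tr g^-1).
Proof. by move=> f; rewrite -trM mulVg tr1. Qed.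

Lemma trKV g : cancel (tr g^-1) (tr g).
Proof. by move=> f; rewrite -trM mulgV tr1. Qed.

Lemma tr_inj g : injective (tr g).
Proof. exact: can_inj (trK g). Qed.

Lemma trg1 g : tr g 1%g = 1%g.
Proof. by apply: (mulgI (tr g 1%g)); rewrite -{2}(tl1 g) -mp1 !mulg1. Qed.

Lemma tl1g f : tl 1%g f = 1%g.
Proof. by apply: (mulgI (tl 1%g f)); rewrite -{1}(tr1 f) -mp2 !mulg1. Qed.

Lemma invg_tr g f : ((tr g f)^-1 = tr (tl g f) f^-1)%g.
Proof. by apply: mulg1_eq; rewrite -mp1 mulgV trg1. Qed.

Lemma invg_tl g f : ((tl g f)^-1 = tl g^-1 (tr g f))%g.
Proof. by apply: (mulIg (tl g f)); rewrite mulVg -mp2 mulVg tl1g. Qed.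

Definition Gorbit (f : F) : seq F := undup [seq tr g f | g <- enum G].

Lemma Gorbit_uniq f : uniq (Gorbit f).
Proof. exact: undup_uniq. Qed.

Lemma GorbitP f y : reflect (exists g, tr g f = y) (y \in Gorbit f).
Proof.
rewrite mem_undup; apply: (iffP mapP) => [[g _ ->]|[g <-]]; first by exists g.
by exists g; rewrite ?mem_enum.
Qed.

Lemma Gorbit_tr f g : tr g f \in Gorbit f.
Proof. by apply/GorbitP; exists g. Qed.

Lemma Gorbit_stable f g y : y \in Gorbit f -> tr g y \in Gorbit f.
Proof. by case/GorbitP=> x <-; rewrite -trM Gorbit_tr. Qed.

Lemma Gorbit_trE f g y : (tr g y \in Gorbit f) = (y \in Gorbit f).
Proof.
by apply/idP/idP => [/(Gorbit_stable g^-1)|]; [rewrite trK | apply: Gorbit_stable].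
Qed.

Lemma Gorbit1 y : (y \in Gorbit 1%g) = (y == 1%g).
Proof.
by apply/GorbitP/eqP => [[g <-]|->]; [apply: trg1 | exists 1%g; apply: tr1].
Qed.

Lemma Gorbit_invg f : (exists g, tr g f = f^-1%g) ->
  forall y, y \in Gorbit f -> y^-1%g \in Gorbit f.
Proof. by move=> [g fg] y /GorbitP[m <-]; rewrite invg_tr -fg -trM Gorbit_tr. Qed.

Lemma Gorbit_free_inj f : (forall g, tr g f = f -> g = 1%g) ->
  forall y u u', y \in Gorbit f -> tr u y = tr u' y -> u = u'.
Proof.
move=> free y u u' /GorbitP[g <-]; rewrite -!trM => /(congr1 (tr (u' * g)^-1)).
by rewrite !trK -trM => /free/mulg1_eq; rewrite invgK => e; apply: (mulIg g); rewrite e.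
Qed.

Lemma sum_Gorbit_tr (R : nmodType) f g (F0 : F -> R) :
  \sum_(y <- Gorbit f) F0 (tr g y) = \sum_(y <- Gorbit f) F0 y.
Proof.
rewrite -(big_map (tr g) xpredT); apply/perm_big/uniq_perm.
- by rewrite map_inj_uniq ?Gorbit_uniq //; apply: tr_inj.
- exact: Gorbit_uniq.
move=> y; apply/mapP/idP => [[x xf ->]|yf]; first by rewrite Gorbit_trE.
by exists (tr g^-1 y); rewrite ?trKV ?Gorbit_trE.
Qed.

Lemma sum_Gorbit_tr_pred1 (R : nzSemiRingType) f g w (F0 : F -> R) :
  \sum_(y <- Gorbit f) (w == tr g y)%:R * F0 y = (tr g^-1 w \in Gorbit f)%:R * F0 (tr g^-1 w).
Proof.
rewrite -(sum_seq_pred1 F0 _ (Gorbit_uniq f)); apply: eq_bigr => y _; congr (_%:R * _).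
by rewrite eq_sym (can2_eq (trK g) (trKV g)).
Qed.

Local Notation T := (G * F)%type.
Local Notation pb := (pb K G F).
Local Notation Cf := (Cf K G F tr).
Local Notation subcoalg := (subcoalg K G F tr tau).
Implicit Types (h : T -> K) (E D : set (T -> K)).

Lemma pbE g y z : pb g y z = (z == (g, y))%:R.
Proof. by rewrite /pb /dvec; case: eqP. Qed.

Lemma pb_pairE x z : pb x.1 x.2 z = (z == x)%:R.
Proof. by case: x => g y; apply: pbE. Qed.

Definition Cf_basis (f : F) : seq T := [seq (g, y) | g <- enum G, y <- Gorbit f].

Lemma mem_Cf_basis f x : (x \in Cf_basis f) = (x.2 \in Gorbit f).
Proof.
case: x => g y; apply/allpairsP/idP => [[[a b] /= [_ yb [_ ->]]] //|yf].
by exists (g, y); rewrite mem_enum.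
Qed.

Lemma Cf_basis_uniq f : uniq (Cf_basis f).
Proof.
apply: allpairs_uniq => [||[? ?] [? ?] _ _ [/= -> ->]] //.
  exact: enum_uniq.
exact: Gorbit_uniq.
Qed.

Lemma Cf_expand f h : (forall z, z.2 \notin Gorbit f -> h z = 0) ->
  h = fun z => \sum_(x <- Cf_basis f) h x * pb x.1 x.2 z.
Proof.
move=> hf; apply: funext => z.
under eq_bigr do rewrite pb_pairE mulrC eq_sym.
rewrite sum_seq_pred1 ?Cf_basis_uniq // mem_Cf_basis.
by case: (boolP (_ \in _)) => [_|/hf ->]; rewrite ?mul1r ?mulr0.
Qed.

Lemma CfP f h : Cf f h <-> (forall z, z.2 \notin Gorbit f -> h z = 0).
Proof.
split=> [[n [c [w [Cw ->]]]] z zf|/Cf_expand ->].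
  rewrite big1 // => i _; have [g [g' ->]] := Cw i; rewrite pbE.
  by case: eqP => [ez|_]; [rewrite ez Gorbit_tr in zf | rewrite mulr0].
apply: span_seq => x; rewrite mem_Cf_basis => /GorbitP[g' <-].
by exists x.1, g'.
Qed.

Lemma pb_Cf f g y : y \in Gorbit f -> Cf f (pb g y).
Proof. by move=> yf; apply/CfP => z zf; rewrite pbE; case: eqP => // ez; rewrite ez yf in zf. Qed.

Lemma Cf_subspace f : subspace (Cf f).
Proof.
move=> _ [n [c [w [Cw ->]]]]; apply/CfP => z zf; rewrite big1 // => i _.
by move/CfP: (Cw i) => ->; rewrite ?mulr0.
Qed.

Lemma Cf_finsupp f h : Cf f h -> finsupp h.
Proof.
move/CfP=> hf; apply: (sub_finite_set (B := [set` Cf_basis f])); last exact: finite_seq.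
move=> z /= hz; rewrite mem_Cf_basis; apply: contraT => /hf.
by move/eqP: hz.
Qed.

Definition coprod h (z : T * T) : K :=
  (z.1.2 == tr z.2.1 z.2.2)%:R * tau z.1.1 z.2.1 z.2.2 * h ((z.1.1 * z.2.1)%g, z.2.2).

Lemma DeltaBE x z : DeltaB K G F tr tau x z =
  ((x == ((z.1.1 * z.2.1)%g, z.2.2)) && (z.1.2 == tr z.2.1 z.2.2))%:R * tau z.1.1 z.2.1 z.2.2.
Proof.
case: z x => [[a w] [b y]] [g y'] /=; rewrite /DeltaB /= (bigD1 b) //= big1; last first.
  by move=> t tb; rewrite /tens !pbE /= !xpair_eqE [b == t]eq_sym (negPf tb) /= !mulr0.
rewrite addr0 /tens !pbE /= !xpair_eqE eqxx /=.
have [<-|ne] := eqVneq y' y; last by rewrite !andbF /= !mulr0 mul0r.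
rewrite andbT mulr1; have [->|ne2] := eqVneq g (a * b)%g.
  by rewrite mulgK eqxx /= mulrC.
have -> : (a == g * b^-1)%g = false.
  by apply/negbTE; apply: contra ne2 => /eqP ->; rewrite mulgKV.
by rewrite /= mulr0 mul0r.
Qed.

Lemma DeltaHE h : DeltaH K G F tr tau h = coprod h.
Proof.
apply: funext => z; rewrite /DeltaH /linext (fsbig_setT_single (x0 := ((z.1.1 * z.2.1)%g, z.2.2))).
  by rewrite DeltaBE eqxx /coprod; case: (_ == _); rewrite ?mul1r ?mulr1 ?mul0r ?mulr0 // mulrC.
by move=> x nx; rewrite DeltaBE (negPf nx) mul0r mulr0.
Qed.

Lemma tensC_Cf f t : (forall z, (z.1.2 \notin Gorbit f) || (z.2.2 \notin Gorbit f) -> t z = 0) ->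
  tensC (Cf f) t.
Proof.
move=> tf; pose B := [seq (x, y) | x <- Cf_basis f, y <- Cf_basis f].
have -> : t = fun z => \sum_(p <- B) t p * tens (pb p.1.1 p.1.2) (pb p.2.1 p.2.2) z.
  apply: funext => z; under eq_bigr => p _.
    rewrite /tens !pb_pairE -natrM mulnb -xpair_eqE -surjective_pairing mulrC eq_sym.
  over.
  rewrite sum_seq_pred1; last by apply: allpairs_uniq; rewrite ?Cf_basis_uniq // => -[? ?] [? ?].
  case: z tf => x y tf; case: (boolP (_ \in _)) => [_|xyB]; first by rewrite mul1r.
  rewrite mul0r tf // -!mem_Cf_basis; apply: contraR xyB; rewrite negb_or !negbK => /andP[xb yb].
  exact: allpairs_f.
apply: span_seq => -[x y] /allpairsP[[x' y'] /= [xb yb [-> ->]]].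
exists (pb x'.1 x'.2), (pb y'.1 y'.2).
by split; [|split] => //; apply: pb_Cf; rewrite -mem_Cf_basis.
Qed.

Lemma Cf_subcoalg f : subcoalg (Cf f).
Proof.
split; first exact: Cf_finsupp.
split=> [|h /CfP hf]; first exact: Cf_subspace.
rewrite DeltaHE; apply: tensC_Cf => z /orP[] zf; rewrite /coprod; last by rewrite hf ?mulr0.
have [ez|] := eqVneq; last by rewrite !mul0r.
by rewrite hf ?mulr0 // -(Gorbit_trE _ z.2.1) -ez.
Qed.

Definition lslice (b : T) h : T -> K := fun a => coprod h (a, b).
Definition rslice (a : T) h : T -> K := fun b => coprod h (a, b).

Lemma linop_lslice b : linop (lslice b).
Proof. by move=> k u v; apply: funext => a; rewrite /lslice /coprod mulrDr mulrCA. Qed.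

Lemma linop_rslice a : linop (rslice a).
Proof. by move=> k u v; apply: funext => b; rewrite /rslice /coprod mulrDr mulrCA. Qed.

Lemma subcoalg_subspace E : subcoalg E -> subspace E.
Proof. by case=> _ []. Qed.

Lemma subcoalg_lslice E b h : subcoalg E -> E h -> E (lslice b h).
Proof.
move=> [_ [subE DeltaE]] /DeltaE; rewrite DeltaHE; exact: tensC_lslice.
Qed.

Lemma subcoalg_rslice E a h : subcoalg E -> E h -> E (rslice a h).
Proof.
move=> [_ [subE DeltaE]] /DeltaE; rewrite DeltaHE; exact: tensC_rslice.
Qed.

Lemma Cf1P h : Cf 1%g h <-> (forall z, z.2 != 1%g -> h z = 0).
Proof.
by rewrite CfP; split=> hf z; [move=> z1; apply: hf; rewrite Gorbit1 | rewrite Gorbit1; apply: hf].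
Qed.

Lemma Cf1_eq a b : Cf 1%g a -> Cf 1%g b -> (forall g, a (g, 1%g) = b (g, 1%g)) -> a = b.
Proof.
move=> /Cf1P a1 /Cf1P b1 ab; apply: funext => -[g y].
by have [->|y1] := eqVneq y 1%g; [apply: ab | rewrite a1 ?b1].
Qed.

Lemma mulHE a b : Cf 1%g b -> mulH K G F tl sigma a b = fun z => a z * b (tl z.1 z.2, 1%g).
Proof.
move/Cf1P=> b1; apply: funext => z; rewrite /mulH (fsbig_setT_single (x0 := z)).
  rewrite (fsbig_setT_single (x0 := (tl z.1 z.2, 1%g))).
    rewrite /mulB eqxx /=; have [_ [-> _]] := sigma_n z.1 z.2 1%g.
    by rewrite mulg1 pb_pairE eqxx !mulr1.
  move=> y yz; rewrite /mulB; case: eqP => [ey|]; last by rewrite mulr0.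
  rewrite b1 ?mulr0 ?mul0r //; apply: contra yz => /eqP y1.
  by rewrite ey -y1 -surjective_pairing.
move=> x xz; rewrite fsbig1 // => y _; rewrite /mulB; case: ifP => _; last by rewrite mulr0.
have [y1|y1] := eqVneq y.2 1%g; last by rewrite b1 // mulr0 mul0r.
by rewrite y1 mulg1 pb_pairE eq_sym (negPf xz) !mulr0.
Qed.

Lemma unitHE z : unitH K G F z = (z.2 == 1%g)%:R.
Proof.
case: z => a b; rewrite /unitH (bigD1 a) //= big1 ?addr0; first by rewrite pbE xpair_eqE eqxx.
by move=> g ga; rewrite pbE xpair_eqE eq_sym (negPf ga).
Qed.

(** [S] maps [p_x] to a nonzero multiple of [p_(Sidx x)]. *)
Definition Sidx (x : T) : T := ((tl x.1 x.2)^-1%g, (tr x.1 x.2)^-1%g).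
Definition Sidx_inv (z : T) : T := ((tl z.1 z.2)^-1%g, tr (tl z.1 z.2) (z.2)^-1%g).

Lemma SidxK : cancel Sidx Sidx_inv.
Proof.
by case=> g f; rewrite /Sidx /Sidx_inv /= [(tl g f)^-1%g]invg_tl -tlM mulgV tl1 !invgK trK.
Qed.

Lemma Sidx_invK : cancel Sidx_inv Sidx.
Proof.
by case=> g f; rewrite /Sidx /Sidx_inv /= -invg_tl invgK -tlM mulgV tl1 trK invgK.
Qed.

Definition Scoef (x : T) : K :=
  (sigma (x.1)^-1%g (tr x.1 x.2) (tr x.1 x.2)^-1%g)^-1 * (tau (x.1)^-1%g x.1 x.2)^-1.

Lemma Scoef_neq0 x : Scoef x != 0.
Proof. by rewrite /Scoef mulf_eq0 !invr_eq0 negb_or sigma_nz tau_nz. Qed.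

Lemma SHE h : SH K G F tr tl sigma tau h = fun z => Scoef (Sidx_inv z) * h (Sidx_inv z).
Proof.
apply: funext => z; rewrite /SH /linext (fsbig_setT_single (x0 := Sidx_inv z)).
  by rewrite /SB pbE -[(_, _)]/(Sidx (Sidx_inv z)) Sidx_invK eqxx mulr1 mulrC.
move=> x xz; rewrite /SB pbE -[(_, _)]/(Sidx x).
by rewrite (_ : (z == Sidx x) = false) ?mulr0 //; apply: contraNF xz => /eqP ->; rewrite SidxK.
Qed.

Lemma Cf1_hopf_subalg : hopf_subalg K G F tr tl sigma tau (Cf 1%g).
Proof.
split; first exact: Cf_subcoalg.
split; first by apply/Cf1P => z z1; rewrite unitHE (negPf z1).
split=> [a b /Cf1P a1 b1|a /Cf1P a1].
  by rewrite mulHE //; apply/Cf1P => z z1; rewrite a1 ?mul0r.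
rewrite SHE; apply/Cf1P => z z1; rewrite a1 ?mulr0 //=.
by apply: contra z1 => /eqP; rewrite -{1}(trg1 (tl z.1 z.2)) => /tr_inj/eqP; rewrite invg_eq1.
Qed.

Lemma kG_DeltaE (c : G -> K) : kG_Delta K G c = fun z => c (z.1 * z.2)%g.
Proof.
apply: funext => -[u v].
rewrite /kG_Delta (bigD1 (u * v)%g) //= [X in _ + X]big1 ?addr0 => [|g gu].
  rewrite (bigD1 v) //= [X in _ + X]big1 ?addr0 => [|t tv].
    by rewrite /tens /pG /dvec /= mulgK !eqxx !mulr1.
  by rewrite /tens /pG /dvec /= [v == t]eq_sym (negPf tv) mulr0.
rewrite big1 ?mulr0 // => t _; rewrite /tens /pG /dvec /=.
case: eqP => [ut|]; last by rewrite mul0r.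
by case: eqP => [vt|]; [rewrite ut -vt mulgKV eqxx in gu | rewrite mulr0].
Qed.

Lemma kG_SE (c : G -> K) : kG_S K G c = fun z => c z^-1%g.
Proof.
apply: funext => z; rewrite /kG_S (bigD1 z^-1%g) //= big1 => [|g gz].
  by rewrite /pG /dvec invgK eqxx mulr1 addr0.
by rewrite /pG /dvec; case: eqP => [zg|]; [rewrite zg invgK eqxx in gz | rewrite mulr0].
Qed.

Lemma Cf1_iso_kG : hopf_iso_kG K G F tr tl sigma tau.
Proof.
split=> [g|].
  by apply: funext => x; rewrite /phi1 pbE /pG /dvec xpair_eqE eqxx andbT; case: eqP.
split=> [a b a1 b1 ab|]; first by apply: Cf1_eq => // g; apply: (congr1 (fun u => u g) ab).
split=> [c|].
  exists (fun z => if z.2 == 1%g then c z.1 else 0).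
  split; last by apply: funext => g; rewrite /phi1 eqxx.
  by apply/Cf1P => z /negPf ->.
split=> //; split=> [a b a1 b1|].
  by rewrite mulHE //; apply: funext => g; rewrite /phi1 /kG_mul tl1.
split; first by apply: funext => g; rewrite /phi1 /kG_unit unitHE eqxx.
split=> [a a1|].
  rewrite kG_DeltaE DeltaHE; apply: funext => -[u v].
  rewrite /phi1_tens /phi1 /coprod /= trg1 eqxx.
  by have [_ [_ ->]] := tau_n u v 1%g; rewrite !mul1r.
split=> [a /Cf1P a1|a a1].
  rewrite /kG_eps /epsH /phi1 (fsbig_setT_single (x0 := (1%g, 1%g))) /= ?eqxx ?mulr1 //.
  move=> [g y] gy /=; have [g1|] := eqVneq g 1%g; last by rewrite mulr0.
  by rewrite a1 ?mul0r //=; apply: contra gy => /eqP ->; rewrite g1.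
rewrite kG_SE SHE; apply: funext => g.
rewrite /phi1 /Sidx_inv /Scoef /= tl1 invg1 trg1 invgK trg1 invg1.
by have [_ [-> _]] := sigma_n g 1%g 1%g; have [_ [_ ->]] := tau_n g g^-1 1%g; rewrite invr1 !mul1r.
Qed.

Lemma Gorbit_Sidx f x : (exists g, tr g f = f^-1%g) ->
  ((Sidx x).2 \in Gorbit f) = (x.2 \in Gorbit f).
Proof.
move=> finv; rewrite /Sidx /= -[x.2 \in _](Gorbit_trE _ x.1).
by apply/idP/idP => /(Gorbit_invg finv); rewrite ?invgK.
Qed.

Lemma SH_Cf_eq f :
  (SH K G F tr tl sigma tau) @` (Cf f) = Cf f <-> exists g : G, tr g f = (f^-1)%g.
Proof.
split=> [SCf|finv].
  have : Cf f (SH K G F tr tl sigma tau (pb 1%g f)).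
    by rewrite -SCf; exists (pb 1%g f) => //; apply: pb_Cf; rewrite -{1}(tr1 f) Gorbit_tr.
  move/CfP/(_ (Sidx (1%g, f))); rewrite SHE SidxK pbE eqxx mulr1 /Sidx /= tr1.
  move=> S0; have /GorbitP[g gf] : f^-1%g \in Gorbit f.
    by apply: contraT => /S0/eqP; rewrite (negPf (Scoef_neq0 _)).
  by exists g.
apply/seteqP; split=> [_ [h /CfP hf <-]|h /CfP hf].
  apply/CfP => z zf; rewrite SHE hf ?mulr0 //.
  by rewrite -(Gorbit_Sidx _ finv) Sidx_invK.
exists (fun x => (Scoef x)^-1 * h (Sidx x)); last first.
  by rewrite SHE; apply: funext => z; rewrite Sidx_invK mulrA mulfV ?Scoef_neq0 ?mul1r.
by apply/CfP => x xf; rewrite hf ?mulr0 // Gorbit_Sidx.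
Qed.

Lemma subcoalg_free_pb f E h z0 p q : (forall g, tr g f = f -> g = 1%g) ->
  subcoalg E -> E `<=` Cf f -> E h -> h z0 != 0 -> q \in Gorbit f -> E (pb p q).
Proof.
case: z0 => g0 y0 free subE ECf Eh hz0 qf.
have y0f : y0 \in Gorbit f.
  by apply: contraNT hz0 => y0f; move/CfP: (ECf h Eh) => ->.
have [c cy0] : exists c, tr c y0 = q.
  move: y0f qf => /GorbitP[g1 <-] /GorbitP[g2 <-].
  by exists (g2 * g1^-1)%g; rewrite trM trK.
pose m := (p * c)%g; pose a := (g0 * m^-1)%g.
pose sc := tau p c y0 * tau a m y0 * h (g0, y0).
have sc_neq0 : sc != 0 by rewrite !mulf_neq0.
have -> : pb p q = fun z => sc^-1 * lslice (c, y0) (rslice (a, tr m y0) h) z.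
  apply: funext => -[a' w']; rewrite /lslice /rslice /coprod /= pbE xpair_eqE.
  have [->|w'q] := eqVneq w' q; last by rewrite cy0 (negPf w'q) andbF !mul0r mulr0.
  rewrite -cy0 eqxx andbT mul1r.
  have [->|a'p] := eqVneq a' p; first by rewrite eqxx mul1r mulgKV mulrA mulVf.
  rewrite (_ : (tr m y0 == tr (a' * c) y0) = false) ?mul0r ?mulr0 //.
  apply: contraNF a'p => /eqP/(Gorbit_free_inj free y0f) am.
  by apply/eqP/(mulIg c); rewrite -am.
apply: (subspaceZ (subcoalg_subspace subE)); apply: subcoalg_lslice => //; exact: subcoalg_rslice.
Qed.

Lemma Cf_simple f : (forall g, tr g f = f -> g = 1%g) -> simple_subcoalg K G F tr tau (Cf f).
Proof.
move=> free; split; first exact: Cf_subcoalg.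
split.
  exists (pb 1%g f); split; first by apply: pb_Cf; rewrite -{1}(tr1 f) Gorbit_tr.
  by move/(congr1 (fun u => u (1%g, f))); rewrite pbE eqxx /= => /eqP; rewrite oner_eq0.
move=> E subE ECf; have [[h [Eh h0]]|E0] := pselect (exists h, E h /\ h <> fun=> 0); last first.
  left; apply/seteqP; split=> [u Eu|_ ->]; last exact: subspace0 (subcoalg_subspace subE).
  by apply: contra_notP E0 => u0; exists u.
have [z0 hz0] : exists z0, h z0 != 0.
  by apply: contra_notP h0 => hz; apply: funext => z; apply/eqP; apply: contra_notT hz; exists z.
right; apply/seteqP; split=> // k /CfP/Cf_expand ->.
apply: (subspace_sum (subcoalg_subspace subE)) => x; rewrite mem_Cf_basis => xf.
apply: (subspaceZ (subcoalg_subspace subE)).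
exact: (subcoalg_free_pb x.1 free subE ECf Eh hz0 xf).
Qed.

(** Coassociativity of [Delta], read on slices: they compose like a [tau]-twisted action. *)
Lemma lslice_comp a w b y h : lslice (a, w) (lslice (b, y) h) =
  fun z => (w == tr b y)%:R * tau a b y * lslice ((a * b)%g, y) h z.
Proof.
apply: funext => -[c v]; rewrite /lslice /coprod /=.
have [->|wby] := eqVneq w (tr b y); last by rewrite !mul0r !mulr0.
rewrite -trM mulgA; case: (v == _); rewrite ?mul0r ?mulr0 //.
by rewrite !mul1r !mulrA tau_cocycle; congr (_ * _); rewrite mulrC.
Qed.

Lemma rslice_comp a w b y h : rslice (b, y) (rslice (a, w) h) =
  fun z => (w == tr b y)%:R * tau a b y * rslice ((a * b)%g, y) h z.
Proof.
apply: funext => -[c u]; rewrite /rslice /coprod /=.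
have [->|ycu] := eqVneq y (tr c u); last by rewrite !mul0r !mulr0.
rewrite -trM mulgA; case: (w == _); rewrite ?mul0r ?mulr0 //.
by rewrite !mul1r !mulrA tau_cocycle [tau b c u * _]mulrC.
Qed.

Lemma lslice_rsliceC b a h : lslice b (rslice a h) = rslice a (lslice b h).
Proof.
case: a b => [a w] [c u]; apply: funext => -[d v]; rewrite /rslice /lslice /coprod /=.
have [->|vcu] := eqVneq v (tr c u); last by rewrite !mul0r !mulr0.
rewrite -trM mulgA; case: (w == _); rewrite ?mul0r ?mulr0 //.
by rewrite !mul1r !mulrA tau_cocycle [tau d c u * _]mulrC.
Qed.

(** [(eps (x) id) Delta = id] on [C_f], and [(id (x) eps) Delta = id] below. *)
Lemma sum_rslice1 f h z : Cf f h -> \sum_(v <- Gorbit f) rslice (1%g, v) h z = h z.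
Proof.
move/CfP=> hf; case: z => b y; rewrite /rslice /coprod /=.
have [tau1 _] := tau_n b b y.
under eq_bigr do rewrite tau1 mulr1 mul1g.
rewrite (sum_seq_pred1 (fun=> h (b, y))) ?Gorbit_uniq // Gorbit_trE.
by case: (boolP (y \in _)) => [_|/(hf (b, y)) ->]; rewrite ?mul1r ?mulr0.
Qed.

Lemma sum_lslice1 f h z : Cf f h -> \sum_(v <- Gorbit f) lslice (1%g, v) h z = h z.
Proof.
move/CfP=> hf; case: z => a w; rewrite /lslice /coprod /=.
under eq_bigr => v _ do [rewrite tr1 mulg1 eq_sym; have [_ [-> _]] := tau_n a a v; rewrite mulr1].
rewrite sum_seq_pred1 ?Gorbit_uniq //.
by case: (boolP (w \in _)) => [_|/(hf (a, w)) ->]; rewrite ?mul1r ?mulr0.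
Qed.

Definition avg_weight (g : G) (y : F) : K := (tau g g^-1 (tr g y))^-1.

Lemma avg_weight_tau a d y :
  avg_weight d y * tau a d y = avg_weight (a * d) y * tau (a * d)^-1 a (tr d y).
Proof.
rewrite /avg_weight; set w := tr d y.
have ad_d : (d * (a * d)^-1 = a^-1)%g by rewrite invMg mulgA mulgV mul1g.
have ad_a : ((a * d)^-1 * a = d^-1)%g by rewrite invMg -mulgA mulVg mulg1.
have c1 := tau_cocycle a d (a * d)^-1 (tr (a * d) y).
have c2 := tau_cocycle d (a * d)^-1 a w.
have c3 := tau_cocycle a a^-1 a w.
rewrite trK ad_d trM -/w in c1; rewrite ad_d ad_a in c2; rewrite mulgV mulVg in c3.
have [t0 [t1 _]] := tau_n a a w; rewrite t0 t1 mulr1 mul1r in c3.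
have key : tau a d y * tau (a * d) (a * d)^-1 (tr a w) = tau (a * d)^-1 a w * tau d d^-1 w.
  by rewrite c1 c3 mulrC c2 mulrC.
rewrite trM -/w -[tau a d y](mulfK (tau_nz (a * d) (a * d)^-1 (tr a w))) key.
by field; rewrite !tau_nz.
Qed.

Section Averaging.
Variable f : F.
Implicit Type P : (T -> K) -> T -> K.

Definition ravg P h : T -> K := fun z => \sum_(d : G) \sum_(v <- Gorbit f)
  avg_weight d v * rslice (d^-1%g, tr d v) (P (rslice (d, v) h)) z.

Definition lavg P h : T -> K := fun z => \sum_(g : G) \sum_(y <- Gorbit f)
  avg_weight g y * lslice (g, y) (P (lslice (g^-1%g, tr g y) h)) z.

Lemma linop_ravg P : linop P -> linop (ravg P).
Proof.
move=> linP; apply: sum_linop => d; apply: sum_linop => v; apply: scale_linop.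
exact: comp_linop (linop_rslice _) (comp_linop linP (linop_rslice _)).
Qed.

Lemma linop_lavg P : linop P -> linop (lavg P).
Proof.
move=> linP; apply: sum_linop => g; apply: sum_linop => y; apply: scale_linop.
exact: comp_linop (linop_lslice _) (comp_linop linP (linop_lslice _)).
Qed.

Lemma ravg_rslice P a h : linop P -> ravg P (rslice a h) = rslice a (ravg P h).
Proof.
case: a => a w linP; apply: funext => z.
transitivity (\sum_(d : G) (tr d^-1 w \in Gorbit f)%:R *
   (avg_weight d (tr d^-1 w) * tau a d (tr d^-1 w) *
    rslice (d^-1%g, tr d (tr d^-1 w)) (P (rslice ((a * d)%g, tr d^-1 w) h)) z)).
  apply: eq_bigr => d _; rewrite -(sum_Gorbit_tr_pred1 f d w
    (fun v => avg_weight d v * tau a d v *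
              rslice (d^-1%g, tr d v) (P (rslice ((a * d)%g, v) h)) z)).
  apply: eq_bigr => v _; rewrite rslice_comp (linopZ linP) (linopZ (linop_rslice _)).
  ring.
transitivity (\sum_(d : G) (tr d^-1 (tr a w) \in Gorbit f)%:R *
   (avg_weight d (tr d^-1 (tr a w)) * tau d^-1 a w *
    rslice ((d^-1 * a)%g, w) (P (rslice (d, tr d^-1 (tr a w)) h)) z)); last first.
  rewrite /ravg (linop_sum (linop_rslice _)) /=; apply: eq_bigr => d _.
  rewrite (linop_sumZ (linop_rslice _)) -(sum_Gorbit_tr_pred1 f d (tr a w)
    (fun v => avg_weight d v * tau d^-1 a w * rslice ((d^-1 * a)%g, w) (P (rslice (d, v) h)) z)).
  apply: eq_bigr => v _; rewrite rslice_comp eq_sym.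
  ring.
rewrite [RHS](reindex_inj (mulgI a)) /=; apply: eq_bigr => d _.
have ad_a : ((a * d)^-1 * a = d^-1)%g by rewrite invMg -mulgA mulVg mulg1.
have ad_w : tr (a * d)^-1 (tr a w) = tr d^-1 w by rewrite -trM ad_a.
by rewrite ad_a ad_w avg_weight_tau trKV.
Qed.

Lemma lavg_lslice P b h : linop P -> lavg P (lslice b h) = lslice b (lavg P h).
Proof.
case: b => a w linP; apply: funext => z.
transitivity (\sum_(g : G) (tr g^-1 (tr a w) \in Gorbit f)%:R *
   (avg_weight g (tr g^-1 (tr a w)) * tau g^-1 a w *
    lslice (g, tr g^-1 (tr a w)) (P (lslice ((g^-1 * a)%g, w) h)) z)).
  apply: eq_bigr => g _; rewrite -(sum_Gorbit_tr_pred1 f g (tr a w)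
    (fun y => avg_weight g y * tau g^-1 a w * lslice (g, y) (P (lslice ((g^-1 * a)%g, w) h)) z)).
  apply: eq_bigr => y _; rewrite lslice_comp (linopZ linP) (linopZ (linop_lslice _)) eq_sym.
  ring.
transitivity (\sum_(g : G) (tr g^-1 w \in Gorbit f)%:R *
   (avg_weight g (tr g^-1 w) * tau a g (tr g^-1 w) *
    lslice ((a * g)%g, tr g^-1 w) (P (lslice (g^-1%g, tr g (tr g^-1 w)) h)) z)); last first.
  rewrite /lavg (linop_sum (linop_lslice _)) /=; apply: eq_bigr => g _.
  rewrite (linop_sumZ (linop_lslice _)) -(sum_Gorbit_tr_pred1 f g w
    (fun y => avg_weight g y * tau a g y *
              lslice ((a * g)%g, y) (P (lslice (g^-1%g, tr g y) h)) z)).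
  apply: eq_bigr => y _; rewrite lslice_comp.
  ring.
rewrite [LHS](reindex_inj (mulgI a)) /=; apply: eq_bigr => g _.
have ag_a : ((a * g)^-1 * a = g^-1)%g by rewrite invMg -mulgA mulVg mulg1.
have ag_w : tr (a * g)^-1 (tr a w) = tr g^-1 w by rewrite -trM ag_a.
by rewrite ag_a ag_w avg_weight_tau trKV.
Qed.

Lemma lavg_rslice P a h : (forall b h, P (rslice b h) = rslice b (P h)) ->
  lavg P (rslice a h) = rslice a (lavg P h).
Proof.
move=> PR; apply: funext => z; rewrite /lavg (linop_sum (linop_rslice _)) /=.
apply: eq_bigr => g _; rewrite (linop_sumZ (linop_rslice _)); apply: eq_bigr => y _.
by rewrite lslice_rsliceC PR lslice_rsliceC.
Qed.

Lemma ravg_in E P h : subcoalg E -> (forall h, E (P h)) -> E (ravg P h).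
Proof.
move=> subE PE; have subspE := subcoalg_subspace subE.
apply: (subspace_sum subspE) => d _; apply: (subspace_sum subspE) => v _.
exact/(subspaceZ subspE)/(subcoalg_rslice _ subE).
Qed.

Lemma lavg_in E P h : subcoalg E -> (forall h, E (P h)) -> E (lavg P h).
Proof.
move=> subE PE; have subspE := subcoalg_subspace subE.
apply: (subspace_sum subspE) => g _; apply: (subspace_sum subspE) => y _.
exact/(subspaceZ subspE)/(subcoalg_lslice _ subE).
Qed.

Lemma ravg_id E P (k : K) h : subcoalg E -> E `<=` Cf f ->
  (forall e, E e -> P e = fun z => k * e z) -> E h -> ravg P h = fun z => #|G|%:R * k * h z.
Proof.
move=> subE ECf Pk Eh; apply: funext => z.
have term d v : avg_weight d v * rslice (d^-1%g, tr d v) (P (rslice (d, v) h)) z =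
                k * rslice (1%g, tr d v) h z.
  rewrite Pk; last exact: subcoalg_rslice subE Eh.
  rewrite (linopZ (linop_rslice _)) rslice_comp trK eqxx mulgV.
  by rewrite /avg_weight /= mulr1n; field; apply: tau_nz.
transitivity (\sum_(d : G) k * h z); last by rewrite sumr_const -[LHS]mulr_natl mulrA.
apply: eq_bigr => d _; under eq_bigr do rewrite term.
by rewrite -mulr_sumr (sum_Gorbit_tr f d (fun v => rslice (1%g, v) h z)) sum_rslice1 //; apply: ECf.
Qed.

Lemma lavg_id E P (k : K) h : subcoalg E -> E `<=` Cf f ->
  (forall e, E e -> P e = fun z => k * e z) -> E h -> lavg P h = fun z => #|G|%:R * k * h z.
Proof.
move=> subE ECf Pk Eh; apply: funext => z.
have term g y : avg_weight g y * lslice (g, y) (P (lslice (g^-1%g, tr g y) h)) z =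
                k * lslice (1%g, tr g y) h z.
  rewrite Pk; last exact: subcoalg_lslice subE Eh.
  rewrite (linopZ (linop_lslice _)) lslice_comp trK eqxx mulgV.
  by rewrite /avg_weight /= mulr1n; field; apply: tau_nz.
transitivity (\sum_(g : G) k * h z); last by rewrite sumr_const -[LHS]mulr_natl mulrA.
apply: eq_bigr => g _; under eq_bigr do rewrite term.
by rewrite -mulr_sumr (sum_Gorbit_tr f g (fun v => lslice (1%g, v) h z)) sum_lslice1 //; apply: ECf.
Qed.

End Averaging.

Section Coordinates.
Variable f : F.
Local Notation n := (size (Cf_basis f)).

Definition Cf_coord h : 'rV[K]_n := \row_i h (nth (1%g, 1%g) (Cf_basis f) i).

Definition Cf_of_coord (v : 'rV[K]_n) : T -> K :=
  fun z => \sum_i v 0 i * (z == nth (1%g, 1%g) (Cf_basis f) i)%:R.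

Lemma Cf_coordK h : Cf f h -> Cf_of_coord (Cf_coord h) = h.
Proof.
move/CfP=> hf; apply: funext => z; rewrite /Cf_of_coord.
under eq_bigr do rewrite mxE mulrC eq_sym.
rewrite -(big_mkord xpredT (fun i => (nth (1%g, 1%g) (Cf_basis f) i == z)%:R *
                                     h (nth (1%g, 1%g) (Cf_basis f) i))).
rewrite -(big_nth _ xpredT (fun x => (x == z)%:R * h x)) sum_seq_pred1 ?Cf_basis_uniq //.
by rewrite mem_Cf_basis; case: (boolP (_ \in _)) => [_|/hf ->]; rewrite ?mul1r ?mulr0.
Qed.

Lemma Cf_coord_lin k u v : Cf_coord (fun z => k * u z + v z) = k *: Cf_coord u + Cf_coord v.
Proof. by apply/rowP => i; rewrite !mxE. Qed.

Lemma Cf_of_coordD u v : Cf_of_coord (u + v) = fun z => Cf_of_coord u z + Cf_of_coord v z.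
Proof.
by apply: funext => z; rewrite /Cf_of_coord -big_split; apply: eq_bigr => i _; rewrite mxE mulrDl.
Qed.

Lemma Cf_of_coordZ k u : Cf_of_coord (k *: u) = fun z => k * Cf_of_coord u z.
Proof.
by apply: funext => z; rewrite /Cf_of_coord mulr_sumr; apply: eq_bigr => i _; rewrite mxE mulrA.
Qed.

Definition represents E (M : 'M[K]_n) := forall v, (v <= M)%MS <-> E (Cf_of_coord v).

Lemma represents_ex E : subspace E -> exists M, represents E M.
Proof.
move=> subE; pose inE (M : 'M[K]_n) := forall v, (v <= M)%MS -> E (Cf_of_coord v).
have inE_adds M v : inE M -> E (Cf_of_coord v) -> inE (M + v)%MS.
  move=> EM Ev _ /sub_addsmxP[[u1 u2] /= ->]; rewrite Cf_of_coordD.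
  apply: (subspaceD subE); first exact/EM/submxMl.
  by rewrite [u2]mx11_scalar mul_scalar_mx Cf_of_coordZ; apply: subspaceZ.
pose P (k : nat) := `[< exists M, inE M /\ \rank M = k >].
have P0 : exists k, P k.
  exists 0%N; apply/asboolP; exists 0; rewrite mxrank0; split=> // v.
  rewrite submx0 => /eqP ->; rewrite (_ : Cf_of_coord 0 = fun=> 0); first exact: subspace0.
  by apply: funext => z; rewrite /Cf_of_coord big1 // => i _; rewrite mxE mul0r.
have Pn k : P k -> (k <= n)%N by move/asboolP=> [M [_ <-]]; apply: rank_leq_col.
case: (ex_maxnP P0 Pn) => _ /asboolP[M [EM <-]] maxM.
exists M => v; split=> [/EM //|Ev]; apply: contraT => vM.
have /maxM : P (\rank (M + v)%MS) by apply/asboolP; exists (M + v)%MS; split=> //; apply: inE_adds.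
rewrite leqNgt => /negbTE <-; apply: rank_ltmx; rewrite ltmxE addsmxSl /=.
by apply: contra vM; apply: submx_trans (addsmxSr M v).
Qed.

Lemma represents_sub E D ME MD :
  represents E ME -> represents D MD -> E `<=` D -> (ME <= MD)%MS.
Proof.
move=> rE rD ED; apply/row_subP => i; apply/(rD (row i ME))/ED.
exact/(rE (row i ME))/row_sub.
Qed.

Lemma represents_rank_lt E D ME MD : represents E ME -> represents D MD ->
  E `<=` D -> D `<=` Cf f -> E <> D -> (\rank ME < \rank MD)%N.
Proof.
move=> rE rD ED DCf neqED; have [h [Dh Eh]] : exists h, D h /\ ~ E h.
  apply: contra_notP neqED => DE; apply/seteqP; split=> // h Dh.
  by apply: contra_notP DE => Eh; exists h.
apply: rank_ltmx; rewrite ltmxE (represents_sub rE rD ED) /=; apply/negP => DME.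
apply: Eh; rewrite -(Cf_coordK (DCf h Dh)); apply/(rE (Cf_coord h)).
by apply: submx_trans DME; apply/(rD (Cf_coord h)); rewrite Cf_coordK //; apply: DCf.
Qed.

Definition Cf_proj (M : 'M[K]_n) h : T -> K := Cf_of_coord (Cf_coord h *m proj_mx M M^C%MS).

Lemma linop_Cf_proj M : linop (Cf_proj M).
Proof.
by move=> k u v; rewrite /Cf_proj Cf_coord_lin mulmxDl -scalemxAl Cf_of_coordD Cf_of_coordZ.
Qed.

Lemma Cf_proj_in E M h : represents E M -> E (Cf_proj M h).
Proof. by move=> rE; apply/rE/proj_mx_sub. Qed.

Lemma Cf_proj_id E M h : represents E M -> E `<=` Cf f -> E h -> Cf_proj M h = h.
Proof.
move=> rE ECf Eh; have Cfh := ECf h Eh.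
rewrite /Cf_proj proj_mx_id ?capmx_compl ?Cf_coordK //.
by apply/rE; rewrite Cf_coordK.
Qed.

End Coordinates.

Definition bicomod_proj E (pi : (T -> K) -> T -> K) :=
  [/\ linop pi, forall h, E (pi h), forall e, E e -> pi e = e,
      forall b h, pi (lslice b h) = lslice b (pi h) &
      forall a h, pi (rslice a h) = rslice a (pi h)].

Section BicomoduleProjection.
Variables (D E : set (T -> K)) (pi : (T -> K) -> T -> K).
Hypotheses (subD : subcoalg D) (ED : E `<=` D) (piP : bicomod_proj E pi).

Lemma bicomod_proj_compl h :
  D h -> D (fun z => h z - pi h z) /\ pi (fun z => h z - pi h z) = fun=> 0.
Proof.
case: piP => linpi piE piid _ _ Dh; split.
  exact: subspaceB (subcoalg_subspace subD) _ _ Dh (ED (piE h)).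
by rewrite (linopB linpi) [pi (pi h)]piid //; apply: funext => z; rewrite subrr.
Qed.

Lemma bi_compl_coprod h : pi h = (fun=> 0) -> bi_compl pi (coprod h) = coprod h.
Proof.
case: piP => linpi _ _ piL piR pih0.
have L0 b : pi (lslice b h) = fun=> 0 by rewrite piL pih0 (linop0 (linop_lslice b)).
have R0 a : pi (rslice a h) = fun=> 0 by rewrite piR pih0 (linop0 (linop_rslice a)).
apply: funext => -[z1 z2]; rewrite /bi_compl /= [pi (fun a => _)](L0 z2) [pi (fun b => _)](R0 z1).
have -> : (fun a => pi (fun b => coprod h (a, b)) z2) = fun=> 0.
  by apply: funext => a; rewrite (R0 a).
by rewrite (linop0 linpi) !subr0 addr0.
Qed.

(** Since [Delta h = (1 - pi) (x) (1 - pi) Delta h] for [h] in the kernel, the kernel of [pi]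
    in [D] is a subcoalgebra complementary to [E]. *)
Lemma bicomod_proj_kernel : subcoalg [set h | D h /\ pi h = fun=> 0].
Proof.
have [linpi _ _ _ _] := piP; have [finD [subspD DeltaD]] := subD.
split; first by move=> h [/finD].
split=> [h [n [c [w [Kw ->]]]]|h [Dh pih0]].
  split; first by apply: subspD; exists n, c, w; split=> // i; case: (Kw i).
  rewrite (linop_sumZ linpi); apply: funext => z; rewrite big1 // => i _.
  by case: (Kw i) => _ ->; rewrite mulr0.
rewrite DeltaHE -(bi_compl_coprod pih0).
have := DeltaD h Dh; rewrite DeltaHE => -[n [c [w [Dw ->]]]].
rewrite (bi_compl_sum linpi); apply: span_ord => i.
have [a [b [Da [Db ->]]]] := Dw i; rewrite (bi_compl_tens linpi).
exists (fun z => a z - pi a z), (fun z => b z - pi b z).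
by split; [|split]; try apply: bicomod_proj_compl.
Qed.

End BicomoduleProjection.

(** Maschke's averaging trick, applied on both sides to any projection onto [E]. *)
Lemma bicomod_proj_ex f E : #|G|%:R != 0 :> K -> subcoalg E -> E `<=` Cf f ->
  exists pi, bicomod_proj E pi.
Proof.
move=> G0 subE ECf; have [M rE] := represents_ex f (subcoalg_subspace subE).
have linp := linop_Cf_proj M; have linrp := linop_ravg f linp.
exists (fun h z => (#|G|%:R * #|G|%:R)^-1 * lavg f (ravg f (Cf_proj M)) h z); split.
- exact/scale_linop/linop_lavg.
- move=> h; apply: (subspaceZ (subcoalg_subspace subE)).
  by apply: lavg_in => // h'; apply: ravg_in => // h''; apply: Cf_proj_in rE.
- move=> e Ee; apply: funext => z; rewrite (lavg_id (k := #|G|%:R * 1) subE ECf _ Ee).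
    by rewrite mulr1 mulrA mulVf ?mulf_neq0 ?mul1r.
  move=> e' Ee'; apply: (ravg_id subE ECf _ Ee') => e'' Ee''.
  by rewrite (Cf_proj_id rE ECf Ee''); apply: funext => z'; rewrite mul1r.
- by move=> b h; rewrite lavg_lslice // (linopZ (linop_lslice b)).
- by move=> a h; rewrite lavg_rslice => [|b h']; rewrite ?(linopZ (linop_rslice a)) ?ravg_rslice.
Qed.

Definition simple_part D : set (T -> K) :=
  [set h | exists D', simple_subcoalg K G F tr tau D' /\ D' `<=` D /\ D' h].

Lemma simple_part_mono D D' : D' `<=` D -> simple_part D' `<=` simple_part D.
Proof.
by move=> D'D h [D'' [simD'' [D''D' D''h]]]; exists D''; split; [|split=> // x /D''D' /D'D].
Qed.

Lemma not_simple_subcoalg D : subcoalg D -> ~ simple_subcoalg K G F tr tau D ->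
  (exists h, D h /\ h <> fun=> 0) ->
  exists E e, [/\ subcoalg E, E `<=` D, E <> D, E e & e <> fun=> 0].
Proof.
move=> subD nsimD [h0 [Dh0 h00]]; apply: contra_notP nsimD => noE.
split=> //; split; first by exists h0.
move=> E subE ED; have [[e [Ee e0]]|] := pselect (exists e, E e /\ e <> fun=> 0).
  by right; apply: contra_notP noE => ED'; exists E, e.
move=> noe; left; apply/seteqP; split=> [u Eu|_ ->]; last exact: subspace0 (subcoalg_subspace subE).
by apply: contra_notP noe => u0; exists u.
Qed.

Lemma subcoalg_sub_span_simple f D : #|G|%:R != 0 :> K -> subcoalg D -> D `<=` Cf f ->
  D `<=` span (simple_part D).
Proof.
move=> G0 subD DCf; have [M rD] := represents_ex f (subcoalg_subspace subD).
move: {2}(\rank M) (erefl (\rank M)) => k rkM; elim/ltn_ind: k D M subD DCf rD rkM.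
move=> k IH D M subD DCf rD rkM.
have [simD|nsimD] := pselect (simple_subcoalg K G F tr tau D).
  by move=> h Dh; apply: sub_span; exists D; split=> //; split=> // x.
have [[h0 [Dh0 h00]]|D0] := pselect (exists h, D h /\ h <> fun=> 0); last first.
  move=> h Dh; suff -> : h = fun=> 0 by apply: span0.
  by apply: contra_notP D0 => h0; exists h.
have [E [e [subE ED ED' Ee e0]]] := not_simple_subcoalg subD nsimD (ex_intro _ h0 (conj Dh0 h00)).
have ECf : E `<=` Cf f by move=> x /ED /DCf.
have [pi piP] := bicomod_proj_ex G0 subE ECf.
pose D' := [set h | D h /\ pi h = fun=> 0]; have D'D : D' `<=` D by move=> h [].
have subD' : subcoalg D' := bicomod_proj_kernel subD ED piP.
have [ME rE] := represents_ex f (subcoalg_subspace subE).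
have [MD' rD'] := represents_ex f (subcoalg_subspace subD').
have ltE : (\rank ME < k)%N by rewrite -rkM; apply: represents_rank_lt rE rD ED DCf ED'.
have ltD' : (\rank MD' < k)%N.
  rewrite -rkM; apply: (represents_rank_lt rD' rD D'D DCf) => D'eqD.
  have [_ pie0] : D' e by rewrite D'eqD; apply: ED.
  by case: piP => _ _ piid _ _; apply: e0; rewrite -(piid e Ee).
have D'Cf : D' `<=` Cf f by move=> x /D'D /DCf.
move=> h Dh; have [_ piE _ _ _] := piP.
rewrite (_ : h = fun z => pi h z + (h z - pi h z)); last by apply: funext => z; rewrite addrC subrK.
apply: spanD.
  exact: (span_mono (simple_part_mono ED)) (IH _ ltE E ME subE ECf rE erefl _ (piE h)).
apply: (span_mono (simple_part_mono D'D)) (IH _ ltD' D' MD' subD' D'Cf rD' erefl _ _).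
exact: (bicomod_proj_compl subD ED piP Dh).
Qed.

Lemma Cf_cosemisimple f : #|G|%:R != 0 :> K -> cosemisimple_subcoalg K G F tr tau (Cf f).
Proof.
move=> G0; split; first exact: Cf_subcoalg.
exact: (@subcoalg_sub_span_simple f (Cf f) G0 (Cf_subcoalg f) (fun _ x => x)).
Qed.

End Bicrossed.

Unset Implicit Arguments.
Theorem lemma4p1
  (K : closedFieldType) (charK0 : [pchar K] =i pred0)
  (G : finGroupType) (F : groupType)
  (tr : G -> F -> F) (tl : G -> F -> G)
  (sigma : G -> F -> F -> K) (tau : G -> G -> F -> K)
  (* |> is a left action of G on the set F *)
  (tr1 : forall f, tr 1%g f = f)
  (trM : forall g g' f, tr (g * g')%g f = tr g (tr g' f))
  (* <| is a right action of F on the set G *)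
  (tl1 : forall g, tl g 1%g = g)
  (tlM : forall g f f', tl g (f * f')%g = tl (tl g f) f')
  (* matched pair *)
  (mp1 : forall g f f', tr g (f * f')%g = (tr g f * tr (tl g f) f')%g)
  (mp2 : forall g g' f, tl (g * g')%g f = (tl g (tr g' f) * tl g' f)%g)
  (* sigma, tau take values in K^x *)
  (sigma_nz : forall g f f', sigma g f f' != 0)
  (tau_nz : forall g g' f, tau g g' f != 0)
  (* normalisation *)
  (sigma_n : forall g f f', sigma g 1%g f = 1 /\ sigma g f 1%g = 1 /\ sigma 1%g f f' = 1)
  (tau_n : forall g g' f, tau 1%g g f = 1 /\ tau g 1%g f = 1 /\ tau g g' 1%g = 1)
  (* cocycle conditions *)
  (sigma_cocycle : forall g f f' f'',
     sigma (tl g f) f' f'' * sigma g f (f' * f'')%g = sigma g f f' * sigma g (f * f')%g f'')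
  (tau_cocycle : forall g g' g'' f,
     tau g g' (tr g'' f) * tau (g * g')%g g'' f = tau g (g' * g'')%g f * tau g' g'' f)
  (* compatibility *)
  (sigma_tau : forall g g' f f',
     sigma (g * g')%g f f' * tau g g' (f * f')%g =
     sigma g (tr g' f) (tr (tl g' f) f') * sigma g' f f' * tau g g' f
       * tau (tl g (tr g' f)) (tl g' f) f') :
  (* (1) *)
  (forall f : F, cosemisimple_subcoalg K G F tr tau (Cf K G F tr f)) /\
  hopf_subalg K G F tr tl sigma tau (Cf K G F tr 1%g) /\
  hopf_iso_kG K G F tr tl sigma tau /\
  (* (2) *)
  (forall f : F, (forall g : G, tr g f = f -> g = 1%g) ->
     simple_subcoalg K G F tr tau (Cf K G F tr f) /\
     ((SH K G F tr tl sigma tau) @` (Cf K G F tr f) = Cf K G F tr f <->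
        exists g : G, tr g f = (f^-1)%g)).
Proof.
have G0 : #|G|%:R != 0 :> K.
  by move/pcharf0P: charK0 => ->; rewrite -lt0n; apply/card_gt0P; exists 1%g.
split; first by move=> f; apply: Cf_cosemisimple.
split; first exact: Cf1_hopf_subalg.
split; first exact: Cf1_iso_kG.
by move=> f free; split; [apply: Cf_simple | apply: SH_Cf_eq].
Qed.
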